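(* Let $A,A'$ be alphabets with $A\subset A'$, and let $\mathbf a,\mathbf a'$ be weights with $\mathbf a'|_A=\mathbf a|_A$. Then the map $\Phi:\mathbb T^{A,\mathbf a}\to\mathbb T^{A',\mathbf a'}$, $\Phi([w])=[w]$ (for $w\in A^{\mathbb N}\subset(A')^{\mathbb N}$), is an isometric embedding. Moreover, if $A\subsetneq A'$, then $$\mathrm{dist}_H\big(\Phi(\mathbb T^{A,\mathbf a}),\mathbb T^{A',\mathbf a'}\big)\le\max_{j\in A'\setminus A}\mathbf a'(j).$$
   Context: An alphabet is $\mathbb N$ or $\{1,\dots,M\}$, $M\ge2$. For an alphabet $A$: $A^k$ words of length $k$ ($A^0=\{\varepsilon\}$), $A^*=\bigcup_kA^k$, $A^{\mathbb N}$ infinite words; $A^n_u$, $A^{\mathbb N}_u$: words beginning with $u\in A^*$; $w(n)$: length-$n$ prefix; $i^{(k)}$: $k$ copies of $i$. Graphs $G^A_k=(A^k,E^A_k)$: $E^A_1=\{\{1,i\}:i\in A\setminus\{1\}\}$, $E^A_{k+1}=\{\{12^{(k)},i1^{(k)}\}:i\in A\setminus\{1\}\}\cup\{\{iw,iu\}:i\in A,\{w,u\}\in E^A_k\}$. $A^{\mathbb N}_{u_1}\wedge A^{\mathbb N}_{u_2}$: the $w\in A^{\mathbb N}_{u_1}$ such that for every $n>\max\{|u_1|,|u_2|\}$ some $u\in A^n_{u_2}$ has $\{w(n),u\}\in E^A_n$, together with the symmetric set. Chain joining $w,w'$: list $A^{\mathbb N}_{v_1},\dots,A^{\mathbb N}_{v_N}$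 with $w\in A^{\mathbb N}_{v_1}$, $w'\in A^{\mathbb N}_{v_N}$, consecutive $\wedge$ nonempty. Weight: non-increasing $\mathbf a:\mathbb N\to(0,1/2]$, $\mathbf a(1)=\mathbf a(2)=1/2$, $\mathbf a(i)\to0$; $\Delta_{\mathbf a}(i_1\cdots i_k)=\prod\mathbf a(i_j)$, $\Delta_{\mathbf a}(\varepsilon)=1$. $\rho_{A,\mathbf a}(w,u)=\inf\sum_{i=1}^N\Delta_{\mathbf a}(v_i)$ over chains joining $w,u$; $\mathbb T^{A,\mathbf a}=A^{\mathbb N}/\{\rho_{A,\mathbf a}=0\}$ with metric $d_{A,\mathbf a}([w],[u])=\rho_{A,\mathbf a}(w,u)$. $\mathrm{dist}_H$ is the Hausdorff distance between subsets of $\mathbb T^{A',\mathbf a'}$. *)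

From mathcomp Require Import all_boot all_order all_algebra.
From mathcomp Require Import all_classical all_reals all_analysis.
Set Implicit Arguments. Unset Strict Implicit. Unset Printing Implicit Defensive.
Import Order.TTheory GRing.Theory Num.Theory.
Local Open Scope classical_set_scope.
Local Open Scope ring_scope.
Import numFieldNormedType.Exports.

(* An alphabet: [None] is N = {1,2,...}; [Some M] is {1,...,M} (need M >= 2). *)
Definition alphabet := option nat.

Definition alphabet_ok (A : alphabet) : Prop :=
  match A with None => True | Some M => (2 <= M)%N end.

Definition inA (A : alphabet) (i : nat) : bool :=
  match A with None => (0 < i)%N | Some M => (0 < i)%N && (i <= M)%N end.

(* finite words: seq nat; infinite words: nat -> nat (positions 0,1,2,...) *)
Definition fword_in (A : alphabet) (v : seq nat) : bool := all (inA A) v.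
Definition iword_in (A : alphabet) (w : nat -> nat) : Prop := forall n, inA A (w n).

Definition pref (w : nat -> nat) (n : nat) : seq nat := mkseq w n.

Definition cyl (u : seq nat) (w : nat -> nat) : Prop := pref w (size u) = u.

(* Edges of the graphs G^A_k, as a symmetric relation on finite words;
   edge_base with k = 0 gives E^A_1, and E^A_{k+1} is generated by
   edge_base (with k) and edge_step from E^A_k. *)
Inductive edge (A : alphabet) : seq nat -> seq nat -> Prop :=
| edge_base k i : inA A i -> i != 1%N ->
    edge A (1%N :: nseq k 2%N) (i :: nseq k 1%N)
| edge_step i w u : inA A i -> edge A w u -> edge A (i :: w) (i :: u)
| edge_sym w u : edge A w u -> edge A u w.

Definition meet_half (A : alphabet) (u1 u2 : seq nat) (w : nat -> nat) : Prop :=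
  cyl u1 w /\
  forall n, (maxn (size u1) (size u2) < n)%N ->
    exists u : seq nat, [/\ size u = n, fword_in A u, take (size u2) u = u2
                          & edge A (pref w n) u].

Definition meet (A : alphabet) (u1 u2 : seq nat) (w : nat -> nat) : Prop :=
  iword_in A w /\ (meet_half A u1 u2 w \/ meet_half A u2 u1 w).

Definition meet_nonempty (A : alphabet) (u1 u2 : seq nat) : Prop :=
  exists w, meet A u1 u2 w.

Definition chain (A : alphabet) (w w' : nat -> nat) (vs : seq (seq nat)) : Prop :=
  [/\ vs != [::], all (fword_in A) vs,
      cyl (head [::] vs) w, cyl (last [::] vs) w'
    & forall i, (i.+1 < size vs)%N -> meet_nonempty A (nth [::] vs i) (nth [::] vs i.+1)].

Definition weight {R : realType} (a : nat -> R) : Prop :=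
  [/\ forall i, (0 < i)%N -> a i.+1 <= a i,
      forall i, (0 < i)%N -> 0 < a i /\ a i <= 2^-1,
      a 1%N = 2^-1, a 2%N = 2^-1
    & a i @[i --> \oo] --> 0].

Definition Delta {R : realType} (a : nat -> R) (v : seq nat) : R :=
  \prod_(i <- v) a i.

Definition rho {R : realType} (A : alphabet) (a : nat -> R) (w u : nat -> nat) : R :=
  inf [set s : R | exists vs, chain A w u vs /\ s = \sum_(v <- vs) Delta a v].

(* Hausdorff distance, w.r.t. the pseudometric rho A a, between subsets of A^N
   (equivalently between their images in the quotient T^{A,a}). *)
Definition distH {R : realType} (A : alphabet) (a : nat -> R)
    (X Y : set (nat -> nat)) : R :=
  Num.max (sup [set inf [set rho A a x y | y in Y] | x in X])
          (sup [set inf [set rho A a x y | x in X] | y in Y]).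

(* Two cylinders meet exactly when their words are comparable for the prefix order or
   are twins p 1 2^a and p i 1^b with i <> 1.  This description does not depend on the
   alphabet, so every chain over A is a chain over A' of the same cost.  Conversely, a
   chain over A' joining two points of A^N becomes a chain over A when each word is cut
   at its first letter outside A and completed by 1 2^m: twins and prefixes are mapped to
   twins or prefixes, and for m large the tail 1 2^m costs less than the part cut off.
   Finally, a point of A'^N outside A^N, whose first letter j outside A follows the
   prefix v, is joined to the point v 1 2 2 2 ... of A^N through the twin cylinders of
   v 1 2^m and v j, at cost at most a'(j) + 2^-m. *)

From mathcomp Require Import all_boot all_order all_algebra.
From mathcomp Require Import all_classical all_reals all_analysis.
From mathcomp Require Import zify.
Set Implicit Arguments. Unset Strict Implicit. Unset Printing Implicit Defensive.
Import Order.TTheory GRing.Theory Num.Theory.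
Local Open Scope classical_set_scope.

Definition twins (s t : seq nat) :=
  exists p i a b, [/\ i != 1, s = p ++ 1 :: nseq a 2 & t = p ++ i :: nseq b 1].

(* For words over an alphabet containing 1 and 2, equivalent to [meet_nonempty]. *)
Definition linked (u1 u2 : seq nat) :=
  [\/ prefix u1 u2, prefix u2 u1, twins u1 u2 | twins u2 u1].

(* The word p 1 2 2 2 ...; it lies in the meet of the cylinders of twins p 1 2^a, p i 1^b. *)
Definition pad12 (p : seq nat) (n : nat) : nat := nth 2 (rcons p 1) n.

Lemma fword_cat B u v : fword_in B (u ++ v) = fword_in B u && fword_in B v.
Proof. exact: all_cat. Qed.

Lemma fword_cons B x s : fword_in B (x :: s) = inA B x && fword_in B s.
Proof. by []. Qed.

Lemma fword_nseq B k x : inA B x -> fword_in B (nseq k x).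
Proof. by move=> Bx; rewrite /fword_in all_nseq Bx orbT. Qed.

Lemma fword_1_2s B p m : inA B 1 -> inA B 2 ->
  fword_in B (p ++ 1 :: nseq m 2) = fword_in B p.
Proof. by move=> B1 B2; rewrite fword_cat fword_cons B1 (fword_nseq _ B2) /= andbT. Qed.

Lemma fword_pref B w n : iword_in B w -> fword_in B (pref w n).
Proof. by move=> Bw; apply/allP => x /mapP [i _ ->]. Qed.

Lemma cyl_fword B v w : iword_in B w -> cyl v w -> fword_in B v.
Proof. by move=> Bw <-; apply: fword_pref. Qed.

Lemma take_pref w k n : k <= n -> take k (pref w n) = pref w k.
Proof. by move=> kn; rewrite /pref /mkseq -map_take take_iota (minn_idPl kn). Qed.

Lemma pref_pad12 p n : pref (pad12 p) n = take n (p ++ 1 :: nseq n 2).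
Proof.
apply: (@eq_from_nth _ 0); first by rewrite size_mkseq size_takel // size_cat /= size_nseq; lia.
move=> i; rewrite size_mkseq => lt_in.
rewrite nth_mkseq // nth_take // /pad12 -cats1 !nth_cat.
case: ltnP => [lt_ip|_]; first exact: set_nth_default.
case def_k: (i - size p) => [|k] //=; rewrite nth_nil nth_nseq; case: ifP => // /negbT; lia.
Qed.

Lemma pref_pad12_size p k : pref (pad12 p) (size p + k.+1) = p ++ 1 :: nseq k 2.
Proof.
by rewrite pref_pad12 take_cat ltnNge leq_addr addKn /= take_nseq // -addSnnS leq_addl.
Qed.

Lemma cyl_pad12 p : cyl p (pad12 p).
Proof. by rewrite /cyl pref_pad12 take_size_cat. Qed.

Lemma iword_pad12 B p : inA B 1 -> inA B 2 -> fword_in B p -> iword_in B (pad12 p).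
Proof.
move=> B1 B2 Bp n; rewrite /pad12.
case: (ltnP n (size (rcons p 1))) => hn; last by rewrite nth_default.
have Bp1 : fword_in B (rcons p 1) by rewrite -cats1 fword_cat Bp fword_cons B1.
exact: (allP Bp1) _ (mem_nth _ hn).
Qed.

Lemma edge_twins B s t : edge B s t -> twins s t \/ twins t s.
Proof.
elim=> [k i _ i1 | i w u _ _ [] [p [j [a [b [j1 -> ->]]]]] | w u _ []]; try tauto.
- by left; exists [::], i, k, k.
- by left; exists (i :: p), j, a, b.
- by right; exists (i :: p), j, a, b.
Qed.

Lemma edge_twin_words B p i k : fword_in B p -> inA B i -> i != 1 ->
  edge B (p ++ 1 :: nseq k 2) (p ++ i :: nseq k 1).
Proof.
move=> + Bi i1; elim: p => [|x p IHp] /= => [_|/andP [Bx Bp]]; first exact: edge_base.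
exact: edge_step (IHp Bp).
Qed.

Lemma linked_sym u1 u2 : linked u1 u2 -> linked u2 u1.
Proof. by case=> h; [constructor 2 | constructor 1 | constructor 4 | constructor 3]. Qed.

Lemma prefixes_linked (s u1 u2 : seq nat) : prefix u1 s -> prefix u2 s -> linked u1 u2.
Proof.
rewrite !prefixE => /eqP s1 /eqP s2; case: (leqP (size u1) (size u2)) => [le12|/ltnW le21].
- by constructor 1; rewrite prefixE -s2 take_takel // s1.
- by constructor 2; rewrite prefixE -s1 take_takel // s2.
Qed.

Lemma prefix_cat_nseq (u p : seq nat) x y a : prefix u (p ++ x :: nseq a y) ->
  prefix u p \/ exists a', u = p ++ x :: nseq a' y.
Proof.
rewrite prefixE => /eqP <-; case: (leqP (size u) (size p)) => [le_up|lt_pu].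
  by left; rewrite takel_cat // prefix_take.
right; rewrite take_cat ltnNge (ltnW lt_pu) /=; rewrite -subn_gt0 in lt_pu.
case: (size u - size p) lt_pu => [|k] // _ /=.
case: (leqP k a) => [ka|/ltnW ak]; first by exists k; rewrite take_nseq.
by exists a; rewrite take_oversize ?size_nseq.
Qed.

Lemma twins_prefixes_linked s t u1 u2 : twins s t -> prefix u1 s -> prefix u2 t ->
  linked u1 u2.
Proof.
move=> [p [i [a [b [i1 -> ->]]]]] /prefix_cat_nseq[u1p|[a' ->]] /prefix_cat_nseq[u2p|[b' ->]].
- exact: prefixes_linked (prefix_catl _ u1p) (prefix_catl _ u2p).
- by apply: prefixes_linked (prefix_catl _ u1p) _; apply: prefix_refl.
- by apply: prefixes_linked (prefix_refl _) (prefix_catl _ u2p).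
- by constructor 3; exists p, i, a', b'.
Qed.

Lemma meet_half_linked B u1 u2 w : meet_half B u1 u2 w -> linked u1 u2.
Proof.
move=> [cyl1 /(_ _ (ltnSn _))[u [size_u _ take_u /edge_twins tw]]].
have u1w : prefix u1 (pref w (maxn (size u1) (size u2)).+1).
  by rewrite prefixE take_pref ?leqW ?leq_maxl //; apply/eqP.
have u2u : prefix u2 u by rewrite prefixE take_u.
case: tw => tw; first exact: twins_prefixes_linked tw u1w u2u.
exact: linked_sym (twins_prefixes_linked tw u2u u1w).
Qed.

Lemma meet_nonempty_linked B u1 u2 : meet_nonempty B u1 u2 -> linked u1 u2.
Proof.
by move=> [w [_ [/meet_half_linked | /meet_half_linked /linked_sym]]].
Qed.

Lemma meet_half_pad12 B p i u1 u2 : inA B 1 -> fword_in B p -> inA B i -> i != 1 ->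
  cyl u1 (pad12 p) -> size p <= maxn (size u1) (size u2) ->
  (forall k, maxn (size u1) (size u2) < size p + k.+1 ->
     take (size u2) (p ++ i :: nseq k 1) = u2) ->
  meet_half B u1 u2 (pad12 p).
Proof.
move=> B1 Bp Bi i1 cyl1 le_p take_u2; split => // n lt_n.
have [k def_n] : exists k, n = size p + k.+1 by exists (n - size p).-1; lia.
rewrite def_n in lt_n *; exists (p ++ i :: nseq k 1); split.
- by rewrite size_cat /= size_nseq.
- by rewrite fword_cat Bp fword_cons Bi fword_nseq.
- exact: take_u2.
- by rewrite pref_pad12_size; apply: edge_twin_words.
Qed.

Lemma meet_half_pad12_prefix B u v : inA B 1 -> inA B 2 -> fword_in B v -> prefix u v ->
  meet_half B v u (pad12 v).
Proof.
move=> B1 B2 Bv uv; apply: (meet_half_pad12 (i := 2)) (cyl_pad12 v) (leq_maxl _ _) _ => // k _.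
by rewrite takel_cat ?size_prefix //; apply/eqP; rewrite -prefixE.
Qed.

Lemma meet_half_pad12_twins B p i a b : inA B 1 -> fword_in B p -> inA B i -> i != 1 ->
  meet_half B (p ++ 1 :: nseq a 2) (p ++ i :: nseq b 1) (pad12 p).
Proof.
move=> B1 Bp Bi i1; apply: (meet_half_pad12 (i := i)) => //.
- by rewrite /cyl size_cat /= size_nseq pref_pad12_size.
- by rewrite !size_cat leq_max leq_addr.
move=> k; rewrite !size_cat /= !size_nseq gtn_max => /andP [_ lt_b].
by rewrite take_cat ltnNge leq_addr addKn /= take_nseq //; lia.
Qed.

Lemma linked_meet_nonempty B u1 u2 : inA B 1 -> inA B 2 ->
  fword_in B u1 -> fword_in B u2 -> linked u1 u2 -> meet_nonempty B u1 u2.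
Proof.
move=> B1 B2 Bu1 Bu2 [u12|u21|[p [i [a [b [i1 e1 e2]]]]]|[p [i [a [b [i1 e2 e1]]]]]].
- by exists (pad12 u2); split; [exact: iword_pad12 | right; exact: meet_half_pad12_prefix].
- by exists (pad12 u1); split; [exact: iword_pad12 | left; exact: meet_half_pad12_prefix].
- move: Bu2; rewrite e1 e2 fword_cat fword_cons => /and3P [Bp Bi _].
  by exists (pad12 p); split; [exact: iword_pad12 | left; exact: meet_half_pad12_twins].
- move: Bu1; rewrite e1 e2 fword_cat fword_cons => /and3P [Bp Bi _].
  by exists (pad12 p); split; [exact: iword_pad12 | right; exact: meet_half_pad12_twins].
Qed.

Section Projection.
Variable A : alphabet.
Hypotheses (A1 : inA A 1) (A2 : inA A 2).

Definition prefix_in (v : seq nat) := take (find (predC (inA A)) v) v.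

Definition project (m : nat) (v : seq nat) :=
  if fword_in A v then v else prefix_in v ++ 1 :: nseq m 2.

Lemma fword_prefix_in v : fword_in A (prefix_in v).
Proof.
apply/(all_nthP 0) => i; rewrite size_takel ?find_size // => lt_i.
by rewrite nth_take //; apply/negbFE/(before_find 0 lt_i).
Qed.

Lemma prefix_in_cat u r : fword_in A u -> prefix_in (u ++ r) = u ++ prefix_in r.
Proof.
move=> Au; have Nu : ~~ has (predC (inA A)) u by rewrite has_predC (Au : all _ u).
by rewrite /prefix_in find_cat (negbTE Nu) take_cat ltnNge leq_addr addKn.
Qed.

Lemma prefix_in_catl u r : ~~ fword_in A u -> prefix_in (u ++ r) = prefix_in u.
Proof.
move=> Nu; have Hu : has (predC (inA A)) u by rewrite has_predC.
by rewrite /prefix_in find_cat Hu take_cat -has_find Hu.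
Qed.

Lemma fword_project m v : fword_in A (project m v).
Proof.
rewrite /project; case: ifP => // _.
by rewrite fword_1_2s // fword_prefix_in.
Qed.

Lemma linked_1_2s p m1 m2 : linked (p ++ 1 :: nseq m1 2) (p ++ 1 :: nseq m2 2).
Proof.
wlog le_m : m1 m2 / m1 <= m2 => [hwlog|].
  by case: (leqP m1 m2) => [/hwlog //|/ltnW/hwlog/linked_sym].
constructor 1; rewrite -(subnKC le_m) nseqD -cat_cons catA; exact: prefix_prefix.
Qed.

Lemma project_prefix m1 m2 u1 u2 : prefix u1 u2 ->
  linked (project m1 u1) (project m2 u2).
Proof.
move=> /prefixP [r ->]; rewrite /project fword_cat.
case Au1: (fword_in A u1) => /=; last by rewrite (prefix_in_catl _ (negbT Au1)); apply: linked_1_2s.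
constructor 1; case: ifP => _; first exact: prefix_prefix.
by rewrite prefix_in_cat // -catA prefix_prefix.
Qed.

Lemma project_twins m1 m2 u1 u2 : twins u1 u2 -> linked (project m1 u1) (project m2 u2).
Proof.
move=> [p [i [a [b [i1 -> ->]]]]].
rewrite /project fword_1_2s // fword_cat fword_cons (fword_nseq _ A1) andbT.
case Ap: (fword_in A p) => /=; last by rewrite !(prefix_in_catl _ (negbT Ap)); apply: linked_1_2s.
case Ai: (inA A i) => /=; first by constructor 3; exists p, i, a, b.
by rewrite prefix_in_cat // /prefix_in /= Ai /= cats0; apply: linked_1_2s.
Qed.

Lemma project_linked m1 m2 u1 u2 : linked u1 u2 -> linked (project m1 u1) (project m2 u2).
Proof.
case=> [/project_prefix|/project_prefix/linked_sym|/project_twins|/project_twins/linked_sym];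
  exact.
Qed.

End Projection.

Local Open Scope ring_scope.

Lemma halfpow_small (R : realType) (e : R) : 0 < e ->
  exists N, forall n, (N <= n)%N -> (2^-1) ^+ n <= e.
Proof.
move=> e0; have [N _ hN] := near_infty_natSinv_expn_lt (PosNum e0).
by exists N => n /hN /ltW; rewrite /= mul1r exprVn.
Qed.

Lemma inf_le_approx (R : realType) (E : set R) t : lbound E 0 ->
  (forall e, 0 < e -> exists2 s, E s & s <= t + e) -> inf E <= t.
Proof.
move=> E_ge0 approx; apply/ler_addgt0Pr => e /approx [s Es le_s].
by apply: le_trans le_s; apply: ge_inf => //; exists 0.
Qed.

Lemma lb_le_rho (R : realType) B (c : nat -> R) w u t :
  (forall vs, chain B w u vs -> t <= \sum_(v <- vs) Delta c v) -> t <= rho B c w u.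
Proof.
move=> le_t; apply: lb_le_inf => [|_ [vs [ch ->]]]; last exact: le_t.
by exists (\sum_(v <- [:: [::]]) Delta c v), [:: [::]].
Qed.

Section Weight.
Variables (R : realType) (B : alphabet) (a : nat -> R).
Hypothesis wa : weight a.

Lemma weight_bounds i : inA B i -> 0 < a i <= 2^-1.
Proof.
have [_ bounds _ _ _] := wa; have i_gt0 : inA B i -> (0 < i)%N by case: B => //= M /andP [].
by move=> /i_gt0 /bounds [-> ->].
Qed.

Lemma Delta_cat u v : Delta a (u ++ v) = Delta a u * Delta a v.
Proof. by rewrite /Delta big_cat. Qed.

Lemma Delta_gt0 v : fword_in B v -> 0 < Delta a v.
Proof.
by move=> /allP Bv; rewrite /Delta big_seq prodr_gt0 // => i /Bv /weight_bounds /andP [].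
Qed.

Lemma Delta_le_halfpow v : fword_in B v -> Delta a v <= (2^-1) ^+ size v.
Proof.
have -> : (2^-1 : R) ^+ size v = \prod_(i <- v) 2^-1.
  by rewrite big_const_seq count_predT iter_mulr_1.
move=> /allP Bv; rewrite /Delta !big_seq; apply: ler_prod => i /Bv.
by move=> /weight_bounds /andP [/ltW -> ->].
Qed.

Lemma Delta_le1 v : fword_in B v -> Delta a v <= 1.
Proof.
move=> Bv; apply: le_trans (Delta_le_halfpow Bv) _.
by apply: exprn_ile1; rewrite ?invr_ge0 // invf_le1 // ler1n.
Qed.

Lemma chain_cost_ge0 w u vs : chain B w u vs -> 0 <= \sum_(v <- vs) Delta a v.
Proof.
move=> [_ /allP Bvs _ _ _]; rewrite big_seq sumr_ge0 // => v /Bvs /Delta_gt0.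
exact: ltW.
Qed.

Lemma rho_le_chain w u vs : chain B w u vs -> rho B a w u <= \sum_(v <- vs) Delta a v.
Proof.
move=> c; apply: ge_inf; last by exists vs.
by exists 0 => _ [vs' [c' ->]]; apply: chain_cost_ge0 c'.
Qed.

Lemma rho_ge0 w u : 0 <= rho B a w u.
Proof. by apply: lb_le_rho => vs; apply: chain_cost_ge0. Qed.

Lemma rho_refl_le x e : iword_in B x -> 0 < e -> rho B a x x <= e.
Proof.
move=> Bx /halfpow_small [N le_e].
have c : chain B x x [:: pref x N].
  by split => //=; rewrite ?fword_pref ?andbT /cyl ?size_mkseq // => i; rewrite ltnS ltn0.
apply: le_trans (rho_le_chain c) _; rewrite big_seq1.
by apply: le_trans (Delta_le_halfpow (fword_pref _ Bx)) _; rewrite size_mkseq le_e.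
Qed.

Lemma rho_pad12_le v j w e : inA B 1 -> inA B 2 -> fword_in B v -> inA B j -> j != 1%N ->
  cyl (rcons v j) w -> 0 < e -> rho B a (pad12 v) w <= a j + e.
Proof.
move=> B1 B2 Bv Bj j1 cyl_w /halfpow_small [N le_e].
have Bv12 : fword_in B (v ++ 1%N :: nseq N 2%N) by rewrite fword_1_2s.
have Bvj : fword_in B (rcons v j) by rewrite -cats1 fword_cat Bv fword_cons Bj.
have c : chain B (pad12 v) w [:: v ++ 1%N :: nseq N 2%N; rcons v j].
  split => //=; rewrite ?Bv12 ?Bvj //.
    by rewrite /cyl size_cat /= size_nseq pref_pad12_size.
  case=> [_|//]; apply: linked_meet_nonempty => //.
  by constructor 3; exists v, j, N, 0%N; rewrite cats1.
apply: le_trans (rho_le_chain c) _; rewrite big_cons big_seq1 addrC lerD //.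
  rewrite -cats1 Delta_cat /Delta big_seq1 ler_piMl //.
    by have /andP [/ltW] := weight_bounds Bj.
  exact: Delta_le1.
apply: le_trans (Delta_le_halfpow Bv12) (le_e _ _).
by rewrite size_cat /= size_nseq; lia.
Qed.

End Weight.

Section Embedding.
Variables (R : realType) (A A' : alphabet) (a a' : nat -> R).
Hypotheses (sub : forall i, inA A i -> inA A' i) (A1 : inA A 1%N) (A2 : inA A 2%N).
Hypotheses (wa : weight a) (wa' : weight a') (agree : forall i, inA A i -> a' i = a i).

Lemma fword_sub v : fword_in A v -> fword_in A' v.
Proof. by move=> /allP Av; apply/allP => i /Av /sub. Qed.

Lemma Delta_agree v : fword_in A v -> Delta a' v = Delta a v.
Proof. by move=> /allP Av; apply: eq_big_seq => i /Av /agree. Qed.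

Lemma Delta_project_le v : fword_in A' v -> exists m, Delta a (project A m v) <= Delta a' v.
Proof.
move=> A'v; case Av: (fword_in A v); first by exists 0%N; rewrite /project Av Delta_agree.
set k := find (predC (inA A)) v.
have A'rest : fword_in A' (drop k v).
  by apply/allP => i /mem_drop; apply: (allP A'v).
have [N le_rest] := halfpow_small (Delta_gt0 wa' A'rest).
exists N; rewrite /project Av -{2}(cat_take_drop k v) !Delta_cat Delta_agree ?fword_prefix_in //.
rewrite ler_wpM2l ?(ltW (Delta_gt0 wa (fword_prefix_in _ _))) //.
have A12 : fword_in A ([::] ++ 1%N :: nseq N 2%N) by rewrite fword_1_2s.
by apply: le_trans (Delta_le_halfpow wa A12) (le_rest _ _); rewrite /= size_nseq.
Qed.

Lemma chain_sub w u vs : chain A w u vs -> chain A' w u vs.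
Proof.
move=> [vs0 /allP Avs cyl_h cyl_l meets]; split => //.
  by apply/allP => v /Avs /fword_sub.
move=> i lt_i; apply: linked_meet_nonempty; rewrite ?sub ?fword_sub //.
- by apply: Avs; rewrite mem_nth // ltnW.
- by apply: Avs; rewrite mem_nth.
exact: meet_nonempty_linked (meets i lt_i).
Qed.

Lemma chain_project (f : seq nat -> nat) w u vs : iword_in A w -> iword_in A u ->
  chain A' w u vs -> chain A w u [seq project A (f v) v | v <- vs].
Proof.
move=> Aw Au [vs0 _ cyl_h cyl_l meets]; split.
- by case: (vs) vs0.
- by rewrite all_map; apply/allP => v _; apply: fword_project.
- case: (vs) vs0 cyl_h => //= v vs' _ cyl_v.
  by rewrite /project (cyl_fword Aw cyl_v).
- case: (vs) vs0 cyl_l => //= v vs' _ cyl_v.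
  rewrite (last_map (fun v => project A (f v) v)).
  by rewrite /project (cyl_fword Au cyl_v).
move=> i; rewrite size_map => lt_i; rewrite !(nth_map [::]) ?(ltnW lt_i) //.
apply: linked_meet_nonempty; rewrite ?fword_project //.
exact: project_linked (meet_nonempty_linked (meets i lt_i)).
Qed.

Lemma rho_sub_le w u : rho A' a' w u <= rho A a w u.
Proof.
apply: lb_le_rho => vs c; have [_ /allP Avs _ _ _] := c.
apply: le_trans (rho_le_chain wa' (chain_sub c)) _.
by rewrite le_eqVlt (eq_big_seq _ (fun v Av => Delta_agree (Avs v Av))) eqxx.
Qed.

Lemma rho_project_le w u : iword_in A w -> iword_in A u -> rho A a w u <= rho A' a' w u.
Proof.
move=> Aw Au.
have /choice [f le_f] : forall v, exists m, fword_in A' v -> Delta a (project A m v) <= Delta a' v.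
  move=> v; case: (pselect (fword_in A' v)) => [/Delta_project_le [m le_m]|A'v].
    by exists m => _.
  by exists 0%N => /A'v.
apply: lb_le_rho => vs c; apply: le_trans (rho_le_chain wa (chain_project f Aw Au c)) _.
have [_ /allP A'vs _ _ _] := c.
by rewrite big_map !big_seq; apply: ler_sum => v /A'vs /le_f.
Qed.

Lemma rho_embed w u : iword_in A w -> iword_in A u -> rho A' a' w u = rho A a w u.
Proof. by move=> Aw Au; apply/le_anti; rewrite rho_sub_le rho_project_le. Qed.

Let gap := sup [set a' j | j in [set j | inA A' j /\ ~~ inA A j]].

Lemma gap_ge j : inA A' j -> ~~ inA A j -> a' j <= gap.
Proof.
move=> A'j Nj; apply: ub_le_sup; last by exists j.
by exists 2^-1 => _ [i [A'i _] <-]; have /andP [_ ->] := weight_bounds wa' A'i.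
Qed.

Hypothesis outside : exists j, inA A' j /\ ~~ inA A j.

Lemma gap_ge0 : 0 <= gap.
Proof.
have [j [A'j Nj]] := outside; apply: le_trans (gap_ge A'j Nj).
by have /andP [/ltW] := weight_bounds wa' A'j.
Qed.

Lemma approx_by_A'_word x e : iword_in A x -> 0 < e ->
  exists2 y, iword_in A' y & rho A' a' x y <= gap + e.
Proof.
move=> Ax e0; have A'x : iword_in A' x by move=> n; apply: sub.
exists x => //; apply: le_trans (rho_refl_le wa' A'x e0) _.
by rewrite lerDr gap_ge0.
Qed.

Lemma approx_by_A_word y e : iword_in A' y -> 0 < e ->
  exists2 x, iword_in A x & rho A' a' x y <= gap + e.
Proof.
move=> A'y e0; case: (pselect (iword_in A y)) => [Ay|NAy].
  exists y => //; apply: le_trans (rho_refl_le wa' A'y e0) _.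
  by rewrite lerDr gap_ge0.
have /existsNP [p /negP Np] := NAy.
have exit : exists p, ~~ inA A (y p) by exists p.
case: (ex_minnP exit) => q Nq min_q.
have Apref : fword_in A (pref y q).
  apply/allP => x /mapP [n]; rewrite mem_iota add0n => /andP [_ lt_n] ->.
  by apply/negPn/negP => /min_q; rewrite leqNgt lt_n.
exists (pad12 (pref y q)); first exact: iword_pad12.
have yq1 : y q != 1%N by apply: contraNneq Nq => ->.
have cyl_y : cyl (rcons (pref y q) (y q)) y by rewrite /cyl size_rcons size_mkseq -mkseqS.
apply: le_trans (rho_pad12_le wa' (sub A1) (sub A2) (fword_sub Apref) (A'y q) yq1 cyl_y e0) _.
by rewrite lerD2r gap_ge.
Qed.

Lemma distH_le_gap : distH A' a' (iword_in A) (iword_in A') <= gap.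
Proof.
have A_pad : iword_in A (pad12 [::]) by apply: iword_pad12.
have A'_pad : iword_in A' (pad12 [::]) by move=> n; apply: sub.
rewrite /distH ge_max; apply/andP; split; apply: ge_sup.
- by eexists; exists (pad12 [::]).
- move=> _ [x Ax <-]; apply: inf_le_approx => [_ [y _ <-]|e e0]; first exact: rho_ge0.
  by have [y A'y le_y] := approx_by_A'_word Ax e0; exists (rho A' a' x y) => //; exists y.
- by eexists; exists (pad12 [::]).
- move=> _ [y A'y <-]; apply: inf_le_approx => [_ [x _ <-]|e e0]; first exact: rho_ge0.
  by have [x Ax le_x] := approx_by_A_word A'y e0; exists (rho A' a' x y) => //; exists x.
Qed.

End Embedding.

Lemma alphabet_ok_12 A : alphabet_ok A -> inA A 1%N /\ inA A 2%N.
Proof. by case: A => [M|] //= M2; rewrite M2 (ltnW M2). Qed.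

Theorem lemma5p10 (R : realType) (A A' : alphabet) (a a' : nat -> R) :
  alphabet_ok A -> alphabet_ok A' ->
  (forall i, inA A i -> inA A' i) ->
  weight a -> weight a' ->
  (forall i, inA A i -> a' i = a i) ->
  (forall w u, iword_in A w -> iword_in A u -> rho A' a' w u = rho A a w u) /\
  ((exists j, inA A' j /\ ~~ inA A j) ->
   distH A' a' (iword_in A) (iword_in A')
     <= sup [set a' j | j in [set j | inA A' j /\ ~~ inA A j]]).
Proof.
move=> /alphabet_ok_12 [A1 A2] _ sub wa wa' agree; split.
  exact: rho_embed.
exact: distH_le_gap.
Qed.
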